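(* Let $T$ be a tree on $n\ge 1$ vertices. Then $\mathrm{dearth}(T)\ge \frac{1}{3}n-1$.
   Context: For a tree $T$, let $V_3(T)$ be the set of vertices of degree at least $3$, and $d(v)$ the degree of $v$ in $T$. Two vertices $u,v$ form an odd pair if they are non-adjacent in $T$ and the length of the unique $u$–$v$ path in $T$ is odd; $\mathrm{op}(T)$ is the number of (unordered) odd pairs. The dearth of $T$ is $\mathrm{dearth}(T)=\sum_{v\in V_3(T)}\frac{1}{6}d(v)(d(v)-1)+\mathrm{op}(T)$. *)

From mathcomp Require Import all_boot all_order all_algebra.
Set Implicit Arguments. Unset Strict Implicit. Unset Printing Implicit Defensive.
Import Order.TTheory GRing.Theory Num.Theory.

Definition simple_graph (T : finType) (e : rel T) : Prop :=
  symmetric e /\ irreflexive e.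

Definition num_edges (T : finType) (e : rel T) : nat :=
  #|[set p : T * T | e p.1 p.2]| %/ 2.

Definition is_tree (T : finType) (e : rel T) : Prop :=
  simple_graph e /\ (forall u v : T, connect e u v) /\ num_edges e = #|T|.-1.

Definition deg (T : finType) (e : rel T) (v : T) : nat := #|[set y | e v y]|.

(* u, v form an odd pair: non-adjacent and the (unique) u–v path, given as a
   vertex-repetition-free e-path u :: p ending at v, has odd length size p. *)
Definition odd_pair (T : finType) (e : rel T) (u v : T) : bool :=
  ~~ e u v &&
  [exists n : 'I_#|T|,
     odd n && [exists p : n.-tuple T,
        [&& path e u p, last u p == v & uniq (u :: p)]]].

(* Number of unordered odd pairs (odd pairs are distinct vertices, counted as
   ordered pairs then halved). *)
Definition op_count (T : finType) (e : rel T) : nat :=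
  #|[set p : T * T | odd_pair e p.1 p.2]| %/ 2.

Definition dearth (T : finType) (e : rel T) : rat :=
  (\sum_(v : T | 3 <= deg e v) ((deg e v)%:R * ((deg e v)%:R - 1) / 6))
  + (op_count e)%:R.

From mathcomp Require Import all_boot all_order all_algebra.
From mathcomp Require Import zify lra.
Import Order.TTheory GRing.Theory Num.Theory.
Set Implicit Arguments. Unset Strict Implicit. Unset Printing Implicit Defensive.

(* The degrees of a tree sum to 2(n-1) < 2n, so it has a leaf l; let a be its
   neighbour and measure distances to l.  Vertices at distance at most 2 lie in
   {a} ∪ N(a), so there are at most d(a) + 1 of them.  A vertex x at distance at
   least 3 forms an odd pair with its third ancestor (a path of length 3 whose
   ends are non-adjacent since their distances to l differ by 3), in both orders,
   and these ordered pairs are all distinct because the ancestor is closer to l.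
   Hence n <= d(a) + 1 + op(T), after which the bound is elementary arithmetic
   (for d(a) >= 3 it amounts to d^2 - 3d + 4 >= 0). *)

Section Degrees.

Variables (T : finType) (e : rel T).

Lemma sum_deg : \sum_(v : T) deg e v = #|[set q : T * T | e q.1 q.2]|.
Proof.
rewrite /deg; under eq_bigr do rewrite -sum1dep_card.
by rewrite pair_big_dep /= sum1dep_card.
Qed.

Lemma deg_gt0 v : (1 < #|T|)%N -> (forall u w, connect e u w) -> (0 < deg e v)%N.
Proof.
case/card_gt1P=> x [y [_ _ xy]] conn.
have [w wv] : exists w, w != v by case: (eqVneq x v) => [<-|]; [exists y; rewrite eq_sym | exists x].
case/connectP: (conn v w) => [[|z q] /= pq lw]; first by rewrite lw eqxx in wv.
by apply/card_gt0P; exists z; rewrite inE; case/andP: pq.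
Qed.

Lemma tree_has_leaf : is_tree e -> (1 < #|T|)%N ->
  exists l a, forall y, e l y = (y == a).
Proof.
move=> [_ [conn hE]] n2.
have [l deg_l] : exists l, (deg e l <= 1)%N.
  case: (pickP (fun v => deg e v <= 1)%N) => [l ?|all2]; first by exists l.
  have : (\sum_(v : T) 2 <= \sum_(v : T) deg e v)%N.
    by apply: leq_sum => v _; have := all2 v; rewrite leqNgt => /negbFE.
  have -> : (\sum_(v : T) 2 = 2 * #|T|)%N by rewrite sum_nat_const mulnC.
  by rewrite sum_deg; move: hE; rewrite /num_edges; lia.
have /cards1P [a Na] : #|[set y | e l y]| == 1.
  by have := deg_gt0 l n2 conn; rewrite eqn_leq deg_l.
by exists l, a => y; rewrite -in_set1 -Na inE.
Qed.

End Degrees.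

Lemma odd_pair_path3 (T : finType) (e : rel T) (w0 w1 w2 w3 : T) :
  e w0 w1 -> e w1 w2 -> e w2 w3 -> uniq [:: w0; w1; w2; w3] -> ~~ e w0 w3 ->
  odd_pair e w0 w3.
Proof.
move=> e01 e12 e23 u ne; rewrite /odd_pair ne.
have h3 : (3 < #|T|)%N by have := max_card (mem [:: w0; w1; w2; w3]); rewrite (card_uniqP u).
apply/existsP; exists (Ordinal h3); apply/existsP; exists [tuple w1; w2; w3].
by rewrite /= e01 e12 e23 eqxx; move: u; rewrite /= => ->.
Qed.

Lemma card_le_op_count (T : finType) (e : rel T) (K : {set T}) (f : T -> T) (h : T -> nat) :
  {in K, forall x, h (f x) < h x}%N ->
  {in K, forall x, odd_pair e x (f x) && odd_pair e (f x) x} ->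
  (#|K| <= op_count e)%N.
Proof.
move=> hf oddf.
pose J1 := [set (x, f x) | x in K]; pose J2 := [set (f x, x) | x in K].
have cJ1 : #|J1| = #|K| by rewrite card_imset // => x y [].
have cJ2 : #|J2| = #|K| by rewrite card_imset // => x y [].
have dJ : [disjoint J1 & J2].
  apply/pred0P => -[x y] /=; apply/negbTE/negP => /andP [].
  case/imsetP => x1 x1K [-> ->]; case/imsetP => x2 x2K [h1 h2].
  by have := hf _ x1K; have := hf _ x2K; rewrite -h1 -h2; lia.
have JO : J1 :|: J2 \subset [set q : T * T | odd_pair e q.1 q.2].
  apply/subsetP => -[x y]; rewrite !inE.
  by case/orP => /imsetP [z zK [-> ->]]; case/andP: (oddf _ zK).
have := (leq_card_setU J1 J2).2; rewrite dJ cJ1 cJ2 => /eqP cJ.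
have := subset_leq_card JO; rewrite cJ /op_count => le2K.
by have := leq_div2r 2 le2K; rewrite addnn -mul2n mulKn.
Qed.

Section Distance.

Variables (T : finType) (e : rel T) (r : T).
Hypothesis conn : forall u v : T, connect e u v.
Hypothesis sym : symmetric e.

Definition has_walk (x : T) (n : nat) : bool :=
  [exists q : n.-tuple T, path e x q && (last x q == r)].

Lemma has_walk_exists x : exists n, has_walk x n.
Proof.
case/connectP: (conn x r) => q pq lq; exists (size q).
by apply/existsP; exists (in_tuple q); rewrite /= pq -lq eqxx.
Qed.

Definition dist (x : T) : nat := ex_minn (has_walk_exists x).

Lemma dist_walk x : has_walk x (dist x).
Proof. by rewrite /dist; case: ex_minnP. Qed.

Lemma dist_min x n : has_walk x n -> (dist x <= n)%N.
Proof. by rewrite /dist; case: ex_minnP => m _; apply. Qed.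

Lemma dist_root : dist r = 0%N.
Proof.
by apply/eqP; rewrite -leqn0; apply: dist_min; apply/existsP; exists [tuple]; rewrite /=.
Qed.

Lemma dist_eq0 x : dist x = 0%N -> x = r.
Proof.
move=> d0; have := dist_walk x; rewrite d0 => /existsP [q].
by rewrite tuple0 /= => /eqP.
Qed.

Lemma dist_edge x y : e x y -> (dist x <= (dist y).+1)%N.
Proof.
move=> exy; apply: dist_min; case/existsP: (dist_walk y) => q /andP [pq lq].
by apply/existsP; exists (cons_tuple y q); rewrite /= exy pq.
Qed.

Lemma dist_step x : x != r -> exists y, e x y && ((dist y).+1 == dist x).
Proof.
move=> xr; case/existsP: (dist_walk x); case E: (dist x) => [|n] q.
  by move/dist_eq0: E xr => ->; rewrite eqxx.
case/tupleP: q => y q /= /andP [/andP [exy pq] lq]; exists y; rewrite exy /=.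
have : (dist y <= n)%N by apply: dist_min; apply/existsP; exists q; rewrite pq lq.
by have := dist_edge exy; rewrite E; lia.
Qed.

Definition parent (x : T) : T := odflt x [pick y | e x y && ((dist y).+1 == dist x)].

Lemma parentP x : x != r -> e x (parent x) /\ (dist (parent x)).+1 = dist x.
Proof.
move=> xr; rewrite /parent; case: pickP => [y /andP [exy /eqP] | none] //=.
by case: (dist_step xr) => y; rewrite none.
Qed.

Lemma parent_edge x : (0 < dist x)%N -> e x (parent x) /\ dist (parent x) = (dist x).-1.
Proof.
move=> dx; have xr : x != r by apply: contraTneq dx => ->; rewrite dist_root.
by have [exp <-] := parentP xr; split.
Qed.

Definition parent3 (x : T) : T := parent (parent (parent x)).

Lemma parent3_chain x : (3 <= dist x)%N ->
  [/\ e x (parent x), e (parent x) (parent (parent x)),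
      e (parent (parent x)) (parent3 x) &
      [/\ dist (parent x) = (dist x).-1, dist (parent (parent x)) = (dist x).-2
         & dist (parent3 x) = (dist x - 3)%N]].
Proof.
move=> dx; have [e1 d1] := parent_edge (ltnW (ltnW dx)).
have [e2 d2] : e (parent x) (parent (parent x)) /\
    dist (parent (parent x)) = (dist (parent x)).-1.
  by apply: parent_edge; rewrite d1; lia.
have [e3 d3] : e (parent (parent x)) (parent3 x) /\
    dist (parent3 x) = (dist (parent (parent x))).-1.
  by apply: parent_edge; rewrite d2 d1; lia.
by split=> //; split; rewrite /parent3 ?d3 ?d2 d1; lia.
Qed.

Lemma odd_pairs_parent3 x : (3 <= dist x)%N ->
  odd_pair e x (parent3 x) && odd_pair e (parent3 x) x.
Proof.
move=> dx; have [e1 e2 e3 [d1 d2 d3]] := parent3_chain dx.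
have u : uniq [:: x; parent x; parent (parent x); parent3 x].
  by apply: (@map_uniq _ _ dist); rewrite /= !inE d1 d2 d3; lia.
apply/andP; split.
  by apply: odd_pair_path3 e1 e2 e3 u _; apply/negP => e03; have := dist_edge e03; lia.
apply: (odd_pair_path3 (w1 := parent (parent x)) (w2 := parent x)); rewrite 1?sym //.
  by apply: (@map_uniq _ _ dist); rewrite /= !inE d1 d2 d3; lia.
by apply/negP => e30; have := dist_edge e30; lia.
Qed.

Lemma card_dist_le2 a : (forall y, e r y = (y == a)) ->
  (#|[set x | dist x <= 2]| <= (deg e a).+1)%N.
Proof.
move=> leaf.
have sub : [set x | dist x <= 2]%N \subset a |: [set y | e a y].
  apply/subsetP => x; rewrite !inE => dx.
  case: (eqVneq x r) => [-> | xr]; first by rewrite sym leaf eqxx orbT.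
  have [e1 d1] := parentP xr.
  case: (eqVneq (parent x) r) => [p1 | pr]; first by rewrite -leaf sym -p1 e1.
  have [e2 d2] := parentP pr.
  have p2 : parent (parent x) = r by apply: dist_eq0; lia.
  have pa : parent x = a by apply/eqP; rewrite -leaf sym -p2.
  by rewrite sym -pa e1 orbT.
have := subset_leq_card sub; rewrite cardsU1 /deg; case: (_ \notin _) => /=; lia.
Qed.

End Distance.

Lemma tree_card_le_deg_op_count (T : finType) (e : rel T) : is_tree e -> (0 < #|T|)%N ->
  exists v, (#|T| <= (deg e v).+1 + op_count e)%N.
Proof.
move=> tree n0; have [[sym _] [conn _]] := tree.
case: (leqP #|T| 1) => [n1 | n2].
  by case/card_gt0P: n0 => v _; exists v; lia.
have [l [a leaf]] := tree_has_leaf tree n2.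
exists a; pose A := [set x | dist l conn x <= 2]%N.
have far_op : (#|~: A| <= op_count e)%N.
  apply: (card_le_op_count (f := parent3 l conn) (h := dist l conn)) => x; rewrite !inE -ltnNge => dx.
    by have [_ _ _ [_ _ ->]] := parent3_chain dx; lia.
  exact: odd_pairs_parent3.
have := card_dist_le2 conn sym leaf; rewrite -/A; have := cardsC A; lia.
Qed.

Local Open Scope ring_scope.

Definition deg_weight (d : nat) : rat :=
  if (3 <= d)%N then d%:R * (d%:R - 1) / 6 else 0.

Lemma deg_weight_ge0 d : 0 <= deg_weight d.
Proof.
rewrite /deg_weight; case: ifP => // d3.
by rewrite divr_ge0 // mulr_ge0 // subr_ge0 ler1n; lia.
Qed.

Lemma deg_weight_le_dearth (T : finType) (e : rel T) v :
  deg_weight (deg e v) + (op_count e)%:R <= dearth e.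
Proof.
rewrite /dearth big_mkcond lerD2r (bigD1 v) //= lerDl.
by apply: sumr_ge0 => u _; exact: deg_weight_ge0.
Qed.

Lemma third_sub1_le_deg_weight (n d k : nat) :
  (n <= d.+1 + k)%N -> n%:R / 3 - 1 <= deg_weight d + k%:R.
Proof.
rewrite -(ler_nat rat) natrD -addn1 natrD => hn.
have k0 : 0 <= k%:R :> rat by [].
rewrite /deg_weight; case: ifP => d3; last first.
  have : d%:R <= 2 :> rat by rewrite (ler_nat _ d 2); lia.
  lra.
have : 3 <= d%:R :> rat by rewrite (ler_nat _ 3 d).
nra.
Qed.

Theorem lemma29 (T : finType) (e : rel T) :
  (1 <= #|T|)%N -> is_tree e ->
  (#|T|%:R / 3 - 1 : rat) <= dearth e.
Proof.
move=> n1 tree; have [v hv] := tree_card_le_deg_op_count tree n1.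
exact: le_trans (third_sub1_le_deg_weight hv) (deg_weight_le_dearth e v).
Qed.
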